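(* Let $r\in\mathbb{N}$ and let $0\le a_0<a_1<\dots<a_r\le 1$ be distinct interpolation nodes which are symmetrically distributed, i.e. $a_j=1-a_{r-j}$ for $j=0,\dots,r$. Let $\mathcal{L}\in\mathbb{R}$. For every real $\tau\neq 0$ let $\tilde p_r(\cdot,\tau)$ be the interpolation polynomial defined below. Then for every $s$ and every $\tau\neq 0$, $$\tilde p_r(s-\tau,-\tau)=\sum_{j=0}^r e^{-i a_j\tau\mathcal{L}}\,p_{j,r}(s-\tau,-\tau)=e^{-i\tau\mathcal{L}}\,\tilde p_r(s,\tau).$$
   Context: For real $\tau\neq 0$, let $p_{j,r}(\cdot,\tau)$, $j=0,\dots,r$, be the Lagrange basis polynomials (polynomials in the first variable of degree at most $r$) associated with the distinct points $a_0\tau,\dots,a_r\tau$, i.e. $p_{j,r}(a_m\tau,\tau)=\delta_{j,m}$. Define $\tilde p_r(s,\tau)=\sum_{j=0}^r e^{i a_j\tau\mathcal{L}}\,p_{j,r}(s,\tau)$, the unique polynomial in $s$ of degree at most $r$ with $\tilde p_r(a_j\tau,\tau)=e^{i a_j\tau\mathcal{L}}$ for $j=0,\dots,r$. (In the paper $\mathcal{L}$ is the lower-order part $\mathcal{L}_{\mathrm{low}}$ of a frequency polynomial, a real number for fixed frequencies.) *)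

From HB Require Import structures.
From mathcomp Require Import all_boot all_order all_algebra.
From mathcomp Require Import complex.
From mathcomp Require Import reals trigo.
Set Implicit Arguments. Unset Strict Implicit. Unset Printing Implicit Defensive.
Import Order.TTheory GRing.Theory Num.Theory.
Local Open Scope ring_scope.
Local Open Scope complex_scope.

Definition expi (R : realType) (t : R) : R[i] := (cos t) +i* (sin t).

(* Lagrange basis polynomial p_{j,r}(., tau) for the nodes a_0 tau, ..., a_r tau,
   as a polynomial in the first variable. *)
Definition lagr_poly (R : realType) (r : nat) (a : nat -> R) (j : nat) (tau : R)
  : {poly R} :=
  \prod_(m < r.+1 | (m : nat) != j)
     (('X - (a m * tau)%:P) * ((a j * tau - a m * tau)^-1)%:P).

Definition lagr (R : realType) (r : nat) (a : nat -> R) (j : nat) (s tau : R) : R :=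
  (lagr_poly r a j tau).[s].

Definition ptilde (R : realType) (r : nat) (a : nat -> R) (L s tau : R) : R[i] :=
  \sum_(j < r.+1) expi (a j * tau * L) * (lagr r a j s tau)%:C.

From HB Require Import structures.
From mathcomp Require Import all_boot all_order all_algebra.
From mathcomp Require Import complex.
From mathcomp Require Import reals trigo.
From mathcomp Require Import ring.
Import Order.TTheory GRing.Theory Num.Theory.
Local Open Scope ring_scope.
Local Open Scope complex_scope.

(* Symmetry a_j = 1 - a_(r-j) says that the nodes a_m (-tau) are the nodes
   a_m tau reversed and shifted by -tau.  Lagrange bases are invariant under
   translating nodes and evaluation point together, so
   p_(j,r)(s - tau, -tau) = p_(r-j,r)(s, tau); reversing the summation index
   in ptilde then leaves only the phase e^(-i tau L) from the shift. *)

Lemma expiD (R : realType) (x y : R) : expi (x + y) = expi x * expi y.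
Proof.
rewrite /expi cosD sinD; apply/eqP; rewrite eq_complex /=.
by apply/andP; split; apply/eqP; ring.
Qed.

Section SymmetricNodes.

Variables (R : realType) (r : nat) (a : nat -> R).
Hypothesis a_sym : forall j : nat, (j <= r)%N -> a j = 1 - a (r - j)%N.

Lemma node_reflect (j : 'I_r.+1) (tau : R) :
  a j * - tau = a (rev_ord j) * tau - tau.
Proof.
rewrite [in LHS]a_sym; last by rewrite -ltnS.
by rewrite /= subSS; ring.
Qed.

Lemma lagr_reflect (j : 'I_r.+1) (s tau : R) :
  lagr r a j (s - tau) (- tau) = lagr r a (rev_ord j) s tau.
Proof.
rewrite /lagr /lagr_poly !horner_prod [RHS](reindex_inj rev_ord_inj).
apply: eq_big => [m | m _]; first by rewrite !val_eqE (inj_eq rev_ord_inj).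
by rewrite !hornerE !node_reflect; congr (_ * _^-1); ring.
Qed.

End SymmetricNodes.

Theorem lemma4p2 (R : realType) (r : nat) (a : nat -> R)
  (ha0 : 0 <= a 0%N) (har : a r <= 1)
  (hinc : forall j : nat, (j < r)%N -> a j < a j.+1)
  (hsym : forall j : nat, (j <= r)%N -> a j = 1 - a (r - j)%N)
  (L s tau : R) (htau : tau != 0) :
  ptilde r a L (s - tau) (- tau)
    = \sum_(j < r.+1) expi (- (a j * tau * L)) * (lagr r a j (s - tau) (- tau))%:C
  /\ ptilde r a L (s - tau) (- tau) = expi (- (tau * L)) * ptilde r a L s tau.
Proof.
split; first by apply: eq_bigr => j _; rewrite mulrN mulNr.
rewrite /ptilde (reindex_inj rev_ord_inj) mulr_sumr.
apply: eq_bigr => j _.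
rewrite lagr_reflect // rev_ordK node_reflect // rev_ordK mulrA -expiD.
by congr (expi _ * _); ring.
Qed.
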